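(* Let $(\mathfrak g,J)$ be a real Lie algebra with integrable complex structure, let $(E,I)$ be a real vector space with complex structure, and let $\rho:\mathfrak g\to\operatorname{End}E$ be a representation. Then the following are equivalent: (i) $\rho$ is integrable, i.e. $\mathcal N(x):=[I,\rho(Jx)]+I[\rho(x),I]=0$ for all $x\in\mathfrak g$; (ii) for all $X\in\mathfrak g^{1,0}$ the map $\rho(X)$ has no component in $\operatorname{Hom}(E^{1,0},E^{0,1})$; (iii) $E^{1,0}$ is invariant under the action of $\mathfrak g^{1,0}$; (iv) $\rho|_{\mathfrak g^{1,0}}$ induces by restriction a $\mathbb C$-linear representation of $\mathfrak g^{1,0}$ on $E^{1,0}$.
   Context: A complex structure on a real Lie algebra $\mathfrak g$ is $J\in\operatorname{End}\mathfrak g$ with $J^2=-\mathrm{id}$ and $[x,y]-[Jx,Jy]+J[Jx,y]+J[x,Jy]=0$ for all $x,y$. $\mathfrak g_{\mathbb C}=\mathfrak g^{1,0}\oplus\mathfrak g^{0,1}$ and $E_{\mathbb C}=E^{1,0}\oplus E^{0,1}$ denote the $\pm i$-eigenspace decompositions of the $\mathbb C$-linear extensions of $J$ and $I$; $\rho$ is extended $\mathbb C$-linearly to $\mathfrak g_{\mathbb C}\to\operatorname{End}E_{\mathbb C}$. *)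

(* Real scalars: an arbitrary real closed field R (covers the
   reals); complex scalars: R[i] = complex R from mathcomp-real-closed. *)
From HB Require Import structures.
From mathcomp Require Import all_boot all_order all_algebra.
From mathcomp Require Import complex.
Set Implicit Arguments. Unset Strict Implicit. Unset Printing Implicit Defensive.
Import Order.TTheory GRing.Theory Num.Theory.
Local Open Scope ring_scope.

Section Defs.
Variable R : rcfType.

Definition is_lie_bracket (g : lmodType R) (br : g -> g -> g) : Prop :=
  [/\ (forall (a : R) x y z, br (a *: x + y) z = a *: br x z + br y z),
      (forall (a : R) x y z, br z (a *: x + y) = a *: br z x + br z y),
      (forall x, br x x = 0) &
      (forall x y z, br x (br y z) + br y (br z x) + br z (br x y) = 0)].

Definition is_R_linear (U V : lmodType R) (f : U -> V) : Prop :=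
  forall (a : R) x y, f (a *: x + y) = a *: f x + f y.

Definition complex_structure (V : lmodType R) (J : V -> V) : Prop :=
  is_R_linear J /\ forall x, J (J x) = - x.

Definition integrable_cs (g : lmodType R) (br : g -> g -> g) (J : g -> g) : Prop :=
  complex_structure J /\
  forall x y, br x y - br (J x) (J y) + J (br (J x) y) + J (br x (J y)) = 0.

Definition is_representation (g E : lmodType R) (br : g -> g -> g)
  (rho : g -> E -> E) : Prop :=
  [/\ (forall x, is_R_linear (rho x)),
      (forall (a : R) x y e, rho (a *: x + y) e = a *: rho x e + rho y e) &
      (forall x y e, rho (br x y) e = rho x (rho y e) - rho y (rho x e))].

Definition integrable_rep (g E : lmodType R) (J : g -> g) (I : E -> E)
  (rho : g -> E -> E) : Prop :=
  forall x e,
    (I (rho (J x) e) - rho (J x) (I e)) + I (rho x (I e) - I (rho x e)) = 0.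

(* ---------- complexification V_C = V (+) i V, modelled as pairs (u,v) = u + i v ---------- *)

Definition cpx (V : lmodType R) := (V * V)%type.

Definition cadd (V : lmodType R) (w z : cpx V) : cpx V := (w.1 + z.1, w.2 + z.2).
Definition czero (V : lmodType R) : cpx V := (0, 0).

Definition cscale (V : lmodType R) (c : R[i]) (w : cpx V) : cpx V :=
  (complex.Re c *: w.1 - complex.Im c *: w.2,
   complex.Re c *: w.2 + complex.Im c *: w.1).

Definition ci : R[i] := Complex 0 1.

Definition cext (V : lmodType R) (f : V -> V) (w : cpx V) : cpx V := (f w.1, f w.2).

Definition cbracket (g : lmodType R) (br : g -> g -> g) (w z : cpx g) : cpx g :=
  (br w.1 z.1 - br w.2 z.2, br w.1 z.2 + br w.2 z.1).

Definition crho (g E : lmodType R) (rho : g -> E -> E) (w : cpx g) (e : cpx E) : cpx E :=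
  (rho w.1 e.1 - rho w.2 e.2, rho w.1 e.2 + rho w.2 e.1).

Definition V10 (V : lmodType R) (J : V -> V) (w : cpx V) : Prop :=
  cext J w = cscale ci w.
Definition V01 (V : lmodType R) (J : V -> V) (w : cpx V) : Prop :=
  cext J w = cscale (- ci) w.

Definition proj10 (V : lmodType R) (J : V -> V) (w : cpx V) : cpx V :=
  cscale (Complex (2%:R^-1) 0) (cadd w (cscale (- ci) (cext J w))).
Definition proj01 (V : lmodType R) (J : V -> V) (w : cpx V) : cpx V :=
  cscale (Complex (2%:R^-1) 0) (cadd w (cscale ci (cext J w))).

Definition comp_10_01 (E : lmodType R) (I : E -> E) (f : cpx E -> cpx E)
  (w : cpx E) : cpx E := proj01 I (f (proj10 I w)).

End Defs.

(* The vectors of g^{1,0} and E^{1,0} are exactly X = x - iJx and e = u - iIu.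
   Writing rho(X)e = a + ib, one computes b + Ia = -N(x)(Iu), and a + ib lies in
   E^{1,0} iff b + Ia = 0; as I is onto, this gives (i) <-> (iii).  Condition
   (ii) is (iii) again, since the projection onto E^{1,0} is the identity on
   E^{1,0} and has image E^{1,0}.  Finally the C-linear extension of rho is
   C-linear in both arguments and respects brackets on all of g_C, so (iv)
   adds nothing to (iii). *)

From HB Require Import structures.
From mathcomp Require Import all_boot all_order all_algebra.
From mathcomp Require Import complex.
Import Order.TTheory GRing.Theory Num.Theory.
Set Implicit Arguments. Unset Strict Implicit.
Local Open Scope ring_scope.

Section RLinear.
Variables (R : rcfType) (U V : lmodType R) (f : U -> V).
Hypothesis f_lin : is_R_linear f.

Lemma Rlinear0 : f 0 = 0.
Proof.
have := f_lin 1 0 0; rewrite scale1r addr0 scale1r => f0.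
by apply: (addrI (f 0)); rewrite addr0 -f0.
Qed.

Lemma RlinearD x y : f (x + y) = f x + f y.
Proof. by have := f_lin 1 x y; rewrite !scale1r. Qed.

Lemma RlinearZ a x : f (a *: x) = a *: f x.
Proof. by have := f_lin a x 0; rewrite !addr0 Rlinear0 addr0. Qed.

Lemma RlinearN x : f (- x) = - f x.
Proof. by rewrite -scaleN1r RlinearZ scaleN1r. Qed.

Lemma RlinearB x y : f (x - y) = f x - f y.
Proof. by rewrite RlinearD RlinearN. Qed.

End RLinear.

Section ComplexStructure.
Variables (R : rcfType) (V : lmodType R) (J : V -> V).
Hypothesis J_cs : complex_structure J.

Let J_lin : is_R_linear J. Proof. by case: J_cs. Qed.
Let JJ x : J (J x) = - x. Proof. by case: J_cs. Qed.

Lemma V10P (w : cpx V) : V10 J w <-> w.2 = - J w.1.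
Proof.
case: w => a b; rewrite /V10 /cext /cscale /=.
rewrite !scale0r !scale1r sub0r add0r; split.
  by move=> /(congr1 fst) /= ->; rewrite opprK.
by move=> ->; rewrite (RlinearN J_lin) JJ !opprK.
Qed.

Lemma V10_pair x : V10 J (x, - J x).
Proof. exact/V10P. Qed.

Lemma proj10E (w : cpx V) :
  proj10 J w = (2%:R^-1 *: (w.1 + J w.2), 2%:R^-1 *: (w.2 - J w.1)).
Proof.
case: w => a b; rewrite /proj10 /cadd /cscale /cext /=.
by rewrite !oppr0 !scale0r !scaleN1r !subr0 !addr0 add0r opprK sub0r.
Qed.

Lemma proj10_V10 (w : cpx V) : V10 J (proj10 J w).
Proof.
apply/V10P; rewrite proj10E /= (RlinearZ J_lin) (RlinearD J_lin) JJ.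
by rewrite -scalerN opprD opprK addrC.
Qed.

Lemma proj10_id (w : cpx V) : V10 J w -> proj10 J w = w.
Proof.
case: w => a b /V10P /= ->; rewrite proj10E /= (RlinearN J_lin) JJ opprK.
have half_double (v : V) : 2%:R^-1 *: (v + v) = v.
  by rewrite -mulr2n -scaler_nat scalerA mulVf ?scale1r // pnatr_eq0.
by rewrite -opprD scalerN !half_double.
Qed.

Lemma proj01_eq0 (w : cpx V) : proj01 J w = czero V <-> V10 J w.
Proof.
case: w => a b; rewrite V10P /proj01 /cadd /cscale /cext /czero /=.
rewrite !scale0r !scale1r !subr0 !addr0 sub0r add0r.
have half_neq0 : (2%:R^-1 : R) != 0 by rewrite invr_eq0 pnatr_eq0.
split.
  move=> /(congr1 snd) /= /eqP; rewrite scaler_eq0 (negbTE half_neq0) /=.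
  by rewrite addr_eq0 => /eqP.
by move=> ->; rewrite (RlinearN J_lin) JJ opprK subrr addNr !scaler0.
Qed.

Lemma comp_10_01_eq0P (f : cpx V -> cpx V) :
  (forall w, comp_10_01 J f w = czero V) <-> (forall e, V10 J e -> V10 J (f e)).
Proof.
split=> [f10 e e10 | f10 w]; apply/proj01_eq0.
  by rewrite -(proj10_id e10); exact: f10.
exact/f10/proj10_V10.
Qed.

End ComplexStructure.

Section ComplexifiedRepresentation.
Variables (R : rcfType) (g E : lmodType R) (rho : g -> E -> E).
Hypothesis rho_lin : forall x, is_R_linear (rho x).
Hypothesis rho_lin_l : forall e, is_R_linear (rho^~ e).

Lemma crho_scale_add_r (X : cpx g) (c : R[i]) (e f : cpx E) :
  crho rho X (cadd (cscale c e) f) = cadd (cscale c (crho rho X e)) (crho rho X f).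
Proof.
case: X c e f => [x1 x2] [al be] [a b] [a' b']; rewrite /crho /cadd /cscale /=.
rewrite !(RlinearD (rho_lin _)) ?(RlinearB (rho_lin _)) ?(RlinearN (rho_lin _)).
rewrite !(RlinearZ (rho_lin _)).
rewrite !scalerBr !scalerDr !opprD !addrA.
by congr (_, _); rewrite [LHS](ACl (1*4*2*5*3*6)).
Qed.

Lemma crho_scale_add_l (c : R[i]) (X Y : cpx g) (e : cpx E) :
  crho rho (cadd (cscale c X) Y) e = cadd (cscale c (crho rho X e)) (crho rho Y e).
Proof.
case: c X Y e => [al be] [a b] [a' b'] [e1 e2]; rewrite /crho /cadd /cscale /=.
rewrite !(RlinearD (rho_lin_l _)) ?(RlinearB (rho_lin_l _)) ?(RlinearN (rho_lin_l _)).
rewrite !(RlinearZ (rho_lin_l _)).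
rewrite !scalerBr !scalerDr !opprD !addrA.
by congr (_, _); rewrite [LHS](ACl (1*4*5*2*3*6)).
Qed.

Lemma crho_bracket (br : g -> g -> g) :
  (forall x y e, rho (br x y) e = rho x (rho y e) - rho y (rho x e)) ->
  forall X Y e, crho rho (cbracket br X Y) e
    = cadd (crho rho X (crho rho Y e)) (cscale (-1) (crho rho Y (crho rho X e))).
Proof.
move=> rho_br [x1 x2] [y1 y2] [e1 e2]; rewrite /crho /cbracket /cadd /cscale /=.
rewrite !(RlinearD (rho_lin_l _)) ?(RlinearB (rho_lin_l _)) ?(RlinearN (rho_lin_l _)).
rewrite !rho_br.
rewrite !(RlinearD (rho_lin _)) ?(RlinearB (rho_lin _)) ?(RlinearN (rho_lin _)).
rewrite oppr0 !scaleN1r !scale0r !subr0 !addr0 !opprD !opprK !addrA.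
by congr (_, _); rewrite [LHS](ACl (1*5*7*3*2*8*6*4)).
Qed.

Variables (J : g -> g) (I : E -> E).
Hypothesis I_cs : complex_structure I.

Definition rep_nijenhuis x e :=
  (I (rho (J x) e) - rho (J x) (I e)) + I (rho x (I e) - I (rho x e)).

Lemma crho_V10_pair x u :
  V10 I (crho rho (x, - J x) (u, - I u)) <-> rep_nijenhuis x (I u) = 0.
Proof.
case: I_cs => I_lin II.
set v := crho rho _ _.
have v_defect : v.2 + I v.1 = - rep_nijenhuis x (I u).
  rewrite /v /crho /rep_nijenhuis /= !(RlinearN (rho_lin_l _)) !(RlinearB I_lin).
  rewrite !(RlinearN (rho_lin _), RlinearN I_lin, II, opprK) !opprD !opprK !addrA.
  by rewrite [LHS](ACl (4*2*3*1)).
rewrite (V10P I_cs); split=> [v2 | N0].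
  by apply/eqP; rewrite -oppr_eq0 -v_defect v2 addNr.
by apply/eqP; rewrite -addr_eq0 v_defect N0 oppr0.
Qed.

End ComplexifiedRepresentation.

Theorem mainTheorem2 (R : rcfType) (g E : lmodType R)
  (br : g -> g -> g) (J : g -> g) (I : E -> E) (rho : g -> E -> E) :
  is_lie_bracket br ->
  integrable_cs br J ->
  complex_structure I ->
  is_representation br rho ->
  let TFAE1 := integrable_rep J I rho in
  let TFAE2 := forall X : cpx g, V10 J X ->
                 forall w : cpx E, comp_10_01 I (crho rho X) w = czero E in
  let TFAE3 := forall X : cpx g, V10 J X ->
                 forall e : cpx E, V10 I e -> V10 I (crho rho X e) in
  let TFAE4 :=
    [/\ (forall X : cpx g, V10 J X -> forall e : cpx E, V10 I e -> V10 I (crho rho X e)),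
        (forall (c : R[i]) (X Y : cpx g) (e : cpx E), V10 J X -> V10 J Y -> V10 I e ->
           crho rho (cadd (cscale c X) Y) e
           = cadd (cscale c (crho rho X e)) (crho rho Y e)),
        (forall (X : cpx g) (c : R[i]) (e f : cpx E), V10 J X -> V10 I e -> V10 I f ->
           crho rho X (cadd (cscale c e) f)
           = cadd (cscale c (crho rho X e)) (crho rho X f)) &
        (forall (X Y : cpx g) (e : cpx E), V10 J X -> V10 J Y -> V10 I e ->
           crho rho (cbracket br X Y) e
           = cadd (crho rho X (crho rho Y e)) (cscale (-1) (crho rho Y (crho rho X e))))] in
  (TFAE1 <-> TFAE2) /\ (TFAE2 <-> TFAE3) /\ (TFAE3 <-> TFAE4).
Proof.
move=> _ [J_cs _] I_cs [rho_lin rho_lin_l' rho_br] T1 T2 T3 T4.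
have rho_lin_l e : is_R_linear (rho^~ e) by move=> a x y; exact: rho_lin_l'.
have T23 : T2 <-> T3.
  by split=> H X X10; apply/comp_10_01_eq0P => //; exact: H.
have T13 : T1 <-> T3.
  have pair10 := crho_V10_pair rho_lin rho_lin_l J I_cs.
  split=> H.
    move=> [x1 x2] /(V10P J_cs) /= -> [u1 u2] /(V10P I_cs) /= ->.
    exact/pair10/H.
  move=> x e; have /pair10 := H _ (V10_pair J_cs x) _ (V10_pair I_cs (- I e)).
  by rewrite (RlinearN I_cs.1) I_cs.2 opprK.
split; first exact: iff_trans T13 (iff_sym T23).
split=> //; split=> [T3' | []] //; split=> [//|c X Y e|X c e f|X Y e] _ _ _.
- exact: crho_scale_add_l.
- exact: crho_scale_add_r.
- exact: crho_bracket.
Qed.
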